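(* Every morphism $f\colon[n]\to[m]$ of $\mathcal{I}\Gamma(as)$ can be written uniquely as $f=a\circ h$ with $h\in H_{n+1}^{+}$ and $a\colon[n]\to[m]$ a morphism of the subcategory $\mathcal{R}\cong\Delta R^{op}$. That is, $\mathcal{I}\Gamma(as)=\Delta R^{op}\circ\mathbf{H}^{+}$.
   Context: Let $C_2=\{1,t\}$ and $[n]=\{0,\dots,n\}$. The category $\mathcal{IF}(as)$ has objects $[n]$; a morphism $f\colon[n]\to[m]$ is a map of sets with a total order on each fibre $f^{-1}(i)$ and a label in $C_2$ on each element of $[n]$ (written $j^\alpha$). For $S=\{j_1^{\alpha_1}<\cdots<j_r^{\alpha_r}\}$ put $1\ast S=S$, $t\ast S=\{j_r^{t\alpha_r}<\cdots<j_1^{t\alpha_1}\}$; the composite of $f\colon[n]\to[m]$, $g\colon[m]\to[p]$ has underlying map $g\circ f$ and fibres $(g\circ f)^{-1}(i)=\coprod_{j^\alpha\in g^{-1}(i)}\alpha\ast f^{-1}(j)$ (ordered disjoint union). $\mathcal{I}\Gamma(as)$ is the subcategory of morphisms with $f(0)=0$. $H_{n+1}$ is the automorphism group of $[n]$ in $\mathcal{IF}(as)$, and $H_{n+1}^{+}$ the subgroup of automorphisms fixing $0$ whose label on $0$ is $1$; $\mathbf{H}^+$ is the corresponding groupoid. Morphisms of $\mathcal{I}\Gamma(as)$ (all labels $1$ unless stated): for $n\geqslant1$ and $0\leqslant i\leqslant n-1$, $d_i\colon[n]\to[n-1]$ sends $j\mapsto j$ ($j\leqslant i$), $j\mapsto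 j-1$ ($j>i$), with fibre over $i$ equal to $\{i<i+1\}$; $d_n\colon[n]\to[n-1]$ sends $j\mapsto j$ ($j<n$), $n\mapsto0$, with fibre over $0$ equal to $\{n<0\}$; for $0\leqslant j\leqslant n$, $s_j\colon[n]\to[n+1]$ sends $k\mapsto k$ ($k\leqslant j$), $k\mapsto k+1$ ($k>j$), so the fibre over $j+1$ is empty; $\rho_n\colon[n]\to[n]$ sends $0\mapsto 0$ and $k\mapsto n+1-k$ for $1\leqslant k\leqslant n$, with all labels equal to $t$. $\mathcal{R}$ denotes the subcategory of $\mathcal{I}\Gamma(as)$ generated by all $d_i$, $s_j$, $\rho_n$; it is isomorphic to $\Delta R^{op}$, the opposite of the reflexive crossed simplicial group category. *)

From mathcomp Require Import all_boot.
Set Implicit Arguments. Unset Strict Implicit. Unset Printing Implicit Defensive.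

(* A morphism [n] -> [m] of IF(as), where [n] = {0,...,n} is 'I_n.+1.
   fib i  : the fibre over i, listed in increasing order (the total order);
   lab k  : the label of k in C_2 = {1,t}, with false = 1 and true = t. *)
Record mor (n m : nat) := Mor {
  fib : {ffun 'I_m.+1 -> seq 'I_n.+1};
  lab : {ffun 'I_n.+1 -> bool} }.

Definition valid n m (f : mor n m) : bool :=
  perm_eq (flatten [seq fib f i | i <- enum 'I_m.+1]) (enum 'I_n.+1).

Definition fmap n m (f : mor n m) (k : 'I_n.+1) : 'I_m.+1 :=
  odflt ord0 [pick i | k \in fib f i].

Definition actseq n (a : bool) (s : seq 'I_n.+1) := if a then rev s else s.

Definition mcomp n m p (g : mor m p) (f : mor n m) : mor n p :=
  Mor [ffun i => flatten [seq actseq (lab g j) (fib f j) | j <- fib g i]]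
      [ffun k => lab f k (+) lab g (fmap f k)].

Definition idm n : mor n n := Mor [ffun i => [:: i]] [ffun _ => false].

Definition inIGamma n m (f : mor n m) : Prop := valid f /\ ord0 \in fib f ord0.

Definition is_auto n (h : mor n n) : Prop :=
  valid h /\ exists h' : mor n n, valid h' /\ mcomp h h' = idm n /\ mcomp h' h = idm n.

Definition inHplus n (h : mor n n) : Prop :=
  is_auto h /\ ord0 \in fib h ord0 /\ lab h ord0 = false.

(* d_i : [n+1] -> [n], 0 <= i <= n+1 (for i = n+1 the special face). *)
Definition dmor n (i : nat) : mor n.+1 n :=
  Mor [ffun k : 'I_n.+1 => map inord
        (if i <= n then
           (if k < i then [:: val k] else if val k == i then [:: i; i.+1]
            else [:: (val k).+1])
         else (if val k == 0 then [:: n.+1; 0] else [:: val k]))]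
      [ffun _ => false].

Definition smor n (j : nat) : mor n n.+1 :=
  Mor [ffun k : 'I_n.+2 => map inord
        (if k <= j then [:: val k] else if val k == j.+1 then [::]
         else [:: (val k).-1])]
      [ffun _ => false].

Definition rhomor n : mor n n :=
  Mor [ffun k : 'I_n.+1 => map inord
        (if val k == 0 then [:: 0] else [:: n.+1 - val k])]
      [ffun _ => true].

(* The subcategory R generated by all d_i, s_j, rho_n (closure of the
   identities under post-composition with generators). *)
Inductive inR : forall n m, mor n m -> Prop :=
| inR_id n : inR (idm n)
| inR_d n m (a : mor n m.+1) (i : nat) :
    i <= m.+1 -> inR a -> inR (mcomp (dmor m i) a)
| inR_s n m (a : mor n m) (j : nat) :
    j <= m -> inR a -> inR (mcomp (smor m j) a)
| inR_rho n m (a : mor n m) : inR a -> inR (mcomp (rhomor m) a).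

From mathcomp Require Import all_boot fingroup perm zify.
Set Implicit Arguments. Unset Strict Implicit. Unset Printing Implicit Defensive.

(* A morphism of R has a constant label c, and the concatenation of its fibres (its word) is a
   rotation of 0, ..., n, reversed when c = t.  Conversely, every morphism of this shape with 0 in
   the fibre over 0 lies in R: peel off rho if c = t, a degeneracy s_j for every empty fibre over
   j > 0 and a face d_i for every fibre with at least two elements.  An element h of H^+ is a
   permutation of [n] fixing 0 with arbitrary labels, and precomposing with h permutes the word.
   Given f, exactly one cyclic word with the orientation lab f 0 has 0 at the same position as the
   word of f; the permutation carrying it to the word of f is h, and a = f h^-1. *)

(* Fibres indexed by nat; an index k > m is read as 0 by [inord]. *)
Definition fibn n m (a : mor n m) (k : nat) : seq nat := map val (fib a (inord k)).

Definition word n m (a : mor n m) : seq nat := flatten [seq fibn a k | k <- iota 0 m.+1].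

Definition fibcat n m (a : mor n m) : seq 'I_n.+1 :=
  flatten [seq fib a i | i <- enum 'I_m.+1].

Definition const_lab n m (a : mor n m) (c : bool) := forall x, lab a x = c.

Definition revif T (c : bool) (s : seq T) := if c then rev s else s.

Lemma fibn_ord n m (a : mor n m) (k : 'I_m.+1) : fibn a k = map val (fib a k).
Proof. by rewrite /fibn inord_val. Qed.

Lemma fibn_ub n m (a : mor n m) k : all (leq^~ n) (fibn a k).
Proof. by apply/allP => _ /mapP[x _ ->]; exact: leq_ord. Qed.

Lemma word_fibcat n m (a : mor n m) : word a = map val (fibcat a).
Proof.
rewrite /word /fibcat map_flatten -val_enum_ord -!map_comp.
by congr flatten; apply: eq_map => i /=; rewrite fibn_ord.
Qed.

Lemma size_fibcat n m (a : mor n m) : size (fibcat a) = \sum_(i < m.+1) size (fib a i).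
Proof. by rewrite size_flatten /shape -map_comp sumnE big_map big_enum. Qed.

Lemma fibcat_leqif n m (a : mor n m) : (forall i, 0 < size (fib a i)) ->
  m.+1 <= size (fibcat a) ?= iff [forall i, size (fib a i) == 1].
Proof.
move=> ne; rewrite size_fibcat -{1}(card_ord m.+1) -sum1_card.
by apply: leqif_sum => i _; have := leqif_eq (ne i); rewrite eq_sym.
Qed.

Lemma mor_ext n m (a b : mor n m) : fib a =1 fib b -> lab a =1 lab b -> a = b.
Proof. by case: a b => fa la [fb lb] /ffunP/= -> /ffunP/= ->. Qed.

Lemma eq_mor_fibn n m (a b : mor n m) :
  (forall k, k <= m -> fibn a k = fibn b k) -> lab a =1 lab b -> a = b.
Proof.
move=> eqab; apply: mor_ext => i; apply: (inj_map val_inj).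
by rewrite -!fibn_ord eqab ?leq_ord.
Qed.

Definition mkmor n m (G : nat -> seq nat) (c : bool) : mor n m :=
  Mor [ffun k : 'I_m.+1 => map inord (G k)] [ffun _ => c].

Lemma fibn_mkmor n m G c k : k <= m -> all (leq^~ n) (G k) ->
  fibn (mkmor n m G c) k = G k.
Proof.
move=> km /allP Gn; rewrite /fibn /= ffunE inordK // -map_comp map_id_in // => x /Gn xn.
by rewrite /= inordK.
Qed.

Definition presented p q (g : mor p q) (c : bool) (L : nat -> seq nat) :=
  const_lab g c /\ forall k : 'I_q.+1, fib g k = map inord (L k) /\ all (leq^~ p) (L k).

Lemma lab_mcomp_presented n p q (g : mor p q) c L (a : mor n p) x :
  presented g c L -> lab (mcomp g a) x = lab a x (+) c.
Proof. by case=> labg _; rewrite /= ffunE labg. Qed.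

Lemma fibn_mcomp_presented n p q (g : mor p q) c L (a : mor n p) k :
  presented g c L -> k <= q ->
  fibn (mcomp g a) k = flatten [seq revif c (fibn a j) | j <- L k].
Proof.
case=> labg fibg kq; rewrite /fibn /= ffunE; have [-> _] := fibg (inord k).
rewrite inordK // map_flatten -!map_comp; congr flatten; apply: eq_map => j /=.
by rewrite labg /actseq /revif; case: (c); rewrite ?map_rev.
Qed.

Lemma word_mcomp_presented n p q (g : mor p q) c L (a : mor n p) :
  presented g c L ->
  word (mcomp g a) = flatten [seq revif c (fibn a j) | j <- flatten (map L (iota 0 q.+1))].
Proof.
move=> gL; rewrite /word.
have -> : [seq fibn (mcomp g a) k | k <- iota 0 q.+1] =
          [seq flatten [seq revif c (fibn a j) | j <- L k] | k <- iota 0 q.+1].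
  by apply/eq_in_map => k; rewrite mem_iota => /andP[_ kq]; apply: fibn_mcomp_presented.
by elim: (iota 0 q.+1) => //= k s ->; rewrite map_cat flatten_cat.
Qed.

Lemma factor_presented n p q (g : mor p q) c L (a : mor n q) G b :
  presented g c L -> (forall j, j <= p -> all (leq^~ n) (G j)) ->
  const_lab a (b (+) c) ->
  (forall k, k <= q -> fibn a k = flatten [seq revif c (G j) | j <- L k]) ->
  a = mcomp g (mkmor n p G b).
Proof.
move=> gL Gn laba fiba; apply: eq_mor_fibn => [k kq|x]; last first.
  by rewrite (lab_mcomp_presented _ _ gL) laba /= ffunE.
rewrite fiba // (fibn_mcomp_presented _ gL kq); congr flatten; apply/eq_in_map => j jL.
have [_ /(_ (inord k))[_]] := gL; rewrite inordK // => /allP/(_ j jL) jp.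
by rewrite fibn_mkmor ?Gn.
Qed.

Definition dfib m i k : seq nat :=
  if i <= m then (if k < i then [:: k] else if k == i then [:: i; i.+1] else [:: k.+1])
  else (if k == 0 then [:: m.+1; 0] else [:: k]).

Definition sfib j k : seq nat :=
  if k <= j then [:: k] else if k == j.+1 then [::] else [:: k.-1].

Definition rfib m k : seq nat := if k == 0 then [:: 0] else [:: m.+1 - k].

Lemma presented_dmor m i : i <= m.+1 -> presented (dmor m i) false (dfib m i).
Proof.
move=> im; split=> [x|k]; rewrite ffunE //; split=> //.
by rewrite /dfib; have := ltn_ord k; do !case: ifP => /= ?; lia.
Qed.

Lemma presented_smor m j : j <= m -> presented (smor m j) false (sfib j).
Proof.
move=> jm; split=> [x|k]; rewrite ffunE //; split=> //.
by rewrite /sfib; have := ltn_ord k; do !case: ifP => /= ?; lia.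
Qed.

Lemma presented_rhomor m : presented (rhomor m) true (rfib m).
Proof.
split=> [x|k]; rewrite ffunE //; split=> //.
by rewrite /rfib; have := ltn_ord k; do !case: ifP => /= ?; lia.
Qed.

Lemma flatten_map_singleton (S : eqType) T (F : S -> seq T) (f : S -> T) s :
  {in s, forall k, F k = [:: f k]} -> flatten (map F s) = map f s.
Proof. by move=> Ff; rewrite -[RHS]flatten_map1; congr flatten; apply/eq_in_map. Qed.

Lemma iota_split i m : i <= m -> iota 0 m.+1 = iota 0 i ++ i :: iota i.+1 (m - i).
Proof. by move=> im; rewrite -[m.+1](subnKC (leqW im)) iotaD subSn. Qed.

Lemma flatten_dfib m i : i <= m -> flatten (map (dfib m i) (iota 0 m.+1)) = iota 0 m.+2.
Proof.
move=> im; rewrite /dfib im (iota_split im) map_cat flatten_cat [map _ (_ :: _)]/=.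
rewrite ltnn eqxx [flatten (_ :: _)]/=.
rewrite (@flatten_map_singleton _ _ _ id) => [|k]; last first.
  by rewrite mem_iota => /andP[_ ->].
rewrite (@flatten_map_singleton _ _ _ succn) => [|k]; last first.
  by rewrite mem_iota => /andP[ik _]; rewrite ltnNge ltnW //= gtn_eqF.
rewrite map_id -(iotaDl 1) (iota_split (_ : i <= m.+1)) ?leqW //.
by rewrite subSn.
Qed.

Lemma flatten_dfib_last m : flatten (map (dfib m m.+1) (iota 0 m.+1)) = m.+1 :: iota 0 m.+1.
Proof.
rewrite /dfib ltnn /= (@flatten_map_singleton _ _ _ id) ?map_id // => k.
by rewrite mem_iota => /andP[k1 _]; rewrite gtn_eqF.
Qed.

Lemma flatten_sfib m j : j <= m -> flatten (map (sfib j) (iota 0 m.+2)) = iota 0 m.+1.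
Proof.
move=> jm; rewrite /sfib (iota_split (_ : j.+1 <= m.+1)) // map_cat flatten_cat.
rewrite [map _ (_ :: _)]/= ltnn eqxx [flatten (_ :: _)]/=.
rewrite (@flatten_map_singleton _ _ _ id) => [|k]; last first.
  by rewrite mem_iota ltnS => /andP[_ ->].
rewrite (@flatten_map_singleton _ _ _ predn) => [|k]; last first.
  by rewrite mem_iota => /andP[jk _]; rewrite leqNgt ltnW //= gtn_eqF.
rewrite map_id subSS (iotaDl 1) -map_comp map_id.
by rewrite -iotaD addSn subnKC.
Qed.

Lemma flatten_rfib m : flatten (map (rfib m) (iota 0 m.+1)) = 0 :: rev (iota 1 m).
Proof.
rewrite /rfib /= (@flatten_map_singleton _ _ _ (fun k => m.+1 - k)) => [|k]; last first.
  by rewrite mem_iota => /andP[k1 _]; rewrite gtn_eqF.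
congr (_ :: _); apply: (@eq_from_nth _ 0) => [|i]; rewrite size_map ?size_rev // size_iota.
by move=> im; rewrite nth_rev ?size_iota // (nth_map 0) ?size_iota // !nth_iota; lia.
Qed.

Lemma word_dmor n m (a : mor n m.+1) i : i <= m -> word (mcomp (dmor m i) a) = word a.
Proof.
by move=> im; rewrite (word_mcomp_presented _ (presented_dmor (leqW im))) flatten_dfib.
Qed.

Lemma word_dmor_last n m (a : mor n m.+1) :
  exists k, word (mcomp (dmor m m.+1) a) = rot k (word a).
Proof.
exists (size (flatten (map (fibn a) (iota 0 m.+1)))).
rewrite (word_mcomp_presented _ (presented_dmor (leqnn _))) flatten_dfib_last.
rewrite /word (_ : iota 0 m.+2 = iota 0 m.+1 ++ [:: m.+1]); last by rewrite -[m.+2]addn1 iotaD.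
by rewrite map_cat flatten_cat rot_size_cat /= cats0.
Qed.

Lemma word_smor n m (a : mor n m) j : j <= m -> word (mcomp (smor m j) a) = word a.
Proof. by move=> jm; rewrite (word_mcomp_presented _ (presented_smor jm)) flatten_sfib. Qed.

Lemma word_rhomor n m (a : mor n m) :
  exists k, word (mcomp (rhomor m) a) = rev (rot k (word a)).
Proof.
exists (size (fibn a 0)).
rewrite (word_mcomp_presented _ (presented_rhomor m)) flatten_rfib /word /=.
by rewrite rot_size_cat rev_cat rev_flatten map_rev -!map_comp.
Qed.

Definition cyclic n (c : bool) (w : seq nat) := exists r, w = revif c (rot r (iota 0 n.+1)).

Lemma cyclic_rot n c w k : cyclic n c w -> cyclic n c (rot k w).
Proof.
case=> r ->; case: c; rewrite /revif; last first.
  by exists (rot_add (iota 0 n.+1) r k); rewrite rot_rot_add.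
exists (rot_add (iota 0 n.+1) r (n.+1 - k)).
by rewrite -rev_rotr /rotr size_rot size_iota rot_rot_add.
Qed.

Lemma cyclic_rotr n c w k : cyclic n c w -> cyclic n c (rotr k w).
Proof. exact: cyclic_rot. Qed.

Lemma cyclic_rev n c w : cyclic n c w -> cyclic n (~~ c) (rev w).
Proof. by case=> r ->; exists r; case: c => //=; rewrite revK. Qed.

Lemma cyclic_perm n c w : cyclic n c w -> perm_eq w (iota 0 n.+1).
Proof. by case=> r ->; case: c; rewrite /= ?perm_rev perm_rot. Qed.

Lemma inR_cyclic n m (a : mor n m) : inR a -> exists c, const_lab a c /\ cyclic n c (word a).
Proof.
elim=> {n m a} [n | n m a i im _ [c [laba cyca]] | n m a j jm _ [c [laba cyca]]
               | n m a _ [c [laba cyca]]].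
- exists false; split=> [x|]; first by rewrite ffunE.
  exists 0; rewrite rot0 /word (@flatten_map_singleton _ _ _ id) ?map_id // => k.
  by rewrite mem_iota => /andP[_ kn]; rewrite /fibn /= ffunE /= inordK.
- exists c; split=> [x|]; first by rewrite (lab_mcomp_presented _ _ (presented_dmor im)) laba addbF.
  case: (ltnP i m.+1) => [|mi]; first by rewrite ltnS => /word_dmor->.
  have -> : i = m.+1 by apply/eqP; rewrite eqn_leq im mi.
  by have [k ->] := word_dmor_last a; apply: cyclic_rot.
- exists c; split=> [x|]; first by rewrite (lab_mcomp_presented _ _ (presented_smor jm)) laba addbF.
  by rewrite word_smor.
- exists (~~ c); split=> [x|].
    by rewrite (lab_mcomp_presented _ _ (presented_rhomor m)) laba addbT.
  by have [k ->] := word_rhomor a; apply/cyclic_rev/cyclic_rot.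
Qed.

Lemma head_rot_index (T : eqType) (x : T) s : x \in s -> head x (rot (index x s) s) = x.
Proof. by move=> xs; rewrite /rot (drop_nth x) ?index_mem // nth_index. Qed.

Lemma rot_iota_head0 n k : k <= n.+1 -> head 0 (rot k (iota 0 n.+1)) = 0 ->
  rot k (iota 0 n.+1) = iota 0 n.+1.
Proof.
rewrite leq_eqVlt => /predU1P[-> _|]; first by rewrite -{1}(size_iota 0 n.+1) rot_size.
by case: k => [|k] kn; rewrite ?rot0 // /rot drop_iota subSn.
Qed.

Lemma cyclic_index0 n w : cyclic n false w -> rot (index 0 w) w = iota 0 n.+1.
Proof.
case=> r ->; have r0 : 0 \in rot r (iota 0 n.+1) by rewrite mem_rot mem_iota.
have := head_rot_index r0; rewrite /= rot_rot_add; apply: rot_iota_head0.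
by rewrite -[X in _ <= X](size_iota 0 n.+1) leq_rot_add.
Qed.

Lemma index_rev_uniq (T : eqType) (x : T) s : uniq s -> x \in s ->
  index x (rev s) = size s - (index x s).+1.
Proof.
move=> us xs; have ixs : index x s < size s by rewrite index_mem.
have js : size s - (index x s).+1 < size s by lia.
have nthj : nth x (rev s) (size s - (index x s).+1) = x.
  by rewrite nth_rev // (_ : size s - _ = index x s) ?nth_index //; lia.
by rewrite -{1}nthj index_uniq ?rev_uniq ?size_rev.
Qed.

Lemma cyclic_index0_inj n c w1 w2 : cyclic n c w1 -> cyclic n c w2 ->
  index 0 w1 = index 0 w2 -> w1 = w2.
Proof.
have inj0 v1 v2 : cyclic n false v1 -> cyclic n false v2 -> index 0 v1 = index 0 v2 -> v1 = v2.
  move=> cyc1 cyc2 eq12; apply: (@rot_inj (index 0 v1)).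
  by rewrite {2}eq12 (cyclic_index0 cyc1) (cyclic_index0 cyc2).
case: c => [cyc1 cyc2 eq12|]; last exact: inj0.
have [p1 p2] := (cyclic_perm cyc1, cyclic_perm cyc2).
apply: (inv_inj revK); apply: inj0; [exact: (cyclic_rev cyc1) | exact: (cyclic_rev cyc2) |].
rewrite !index_rev_uniq ?(perm_uniq p1) ?(perm_uniq p2) ?(perm_mem p1) ?(perm_mem p2).
all: rewrite ?iota_uniq ?mem_iota //.
by rewrite (perm_size p1) (perm_size p2) eq12.
Qed.

Lemma cyclic_index0_exists n c p : p <= n -> exists2 w, cyclic n c w & index 0 w = p.
Proof.
have ex0 q : q <= n -> exists2 w, cyclic n false w & index 0 w = q.
  move=> qn; exists (rotr q (iota 0 n.+1)); first by apply: cyclic_rotr; exists 0; rewrite rot0.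
  rewrite /rotr /rot size_iota drop_iota take_iota index_cat mem_iota.
  rewrite ifF; last lia.
  by rewrite size_iota (_ : minn _ _ = (n - q).+1) /=; lia.
case: c => pn; last exact: ex0.
have [w cycw iw] := ex0 (n - p) (leq_subr _ _).
exists (rev w); first exact: cyclic_rev cycw.
have pw := cyclic_perm cycw.
rewrite index_rev_uniq ?(perm_uniq pw) ?(perm_mem pw) ?iota_uniq ?mem_iota //.
by rewrite (perm_size pw) size_iota iw; lia.
Qed.

Definition pmor n (s : {perm 'I_n.+1}) (l : {ffun 'I_n.+1 -> bool}) : mor n n :=
  Mor [ffun j => [:: s j]] l.

Lemma fmap_pmor n (s : {perm 'I_n.+1}) (l : {ffun 'I_n.+1 -> bool}) k :
  fmap (pmor s l) k = (s^-1)%g k.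
Proof.
rewrite /fmap; case: pickP => [i|/(_ ((s^-1)%g k))]; rewrite /= ffunE inE.
  by move=> /eqP->; rewrite permK.
by rewrite permKV eqxx.
Qed.

Lemma fib_mcomp_pmor n m (a : mor n m) s l i : fib (mcomp a (pmor s l)) i = map s (fib a i).
Proof.
rewrite /= ffunE -[RHS]flatten_map1; congr flatten.
by elim: (fib a i) => //= j t ->; rewrite ffunE; case: (lab a j).
Qed.

Lemma lab_mcomp_pmor n m (a : mor n m) s l k :
  lab (mcomp a (pmor s l)) k = l k (+) lab a ((s^-1)%g k).
Proof. by rewrite /= ffunE fmap_pmor. Qed.

Lemma fibcat_mcomp_pmor n m (a : mor n m) s l :
  fibcat (mcomp a (pmor s l)) = map s (fibcat a).
Proof.
rewrite /fibcat map_flatten -[in RHS]map_comp; congr flatten; apply: eq_map => i.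
exact: fib_mcomp_pmor.
Qed.

Lemma valid_pmor n (s : {perm 'I_n.+1}) (l : {ffun 'I_n.+1 -> bool}) : valid (pmor s l).
Proof.
rewrite /valid (eq_map (_ : fib (pmor s l) =1 fun i => [:: s i])) => [|i]; last by rewrite ffunE.
rewrite flatten_map1; apply: uniq_perm => [||x]; rewrite ?(map_inj_uniq perm_inj) ?enum_uniq //.
by rewrite mem_enum; apply/mapP; exists ((s^-1)%g x); rewrite ?mem_enum ?permKV.
Qed.

Lemma mcomp_pmorV n (s : {perm 'I_n.+1}) (l : {ffun 'I_n.+1 -> bool}) :
  mcomp (pmor s l) (pmor (s^-1)%g [ffun k => l (s k)]) = idm n.
Proof.
apply: mor_ext => [i|k]; first by rewrite fib_mcomp_pmor !ffunE /= permK.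
by rewrite lab_mcomp_pmor invgK !ffunE addbb.
Qed.

Lemma mcomp_pmorVl n (s : {perm 'I_n.+1}) (l : {ffun 'I_n.+1 -> bool}) :
  mcomp (pmor (s^-1)%g [ffun k => l (s k)]) (pmor s l) = idm n.
Proof.
apply: mor_ext => [i|k]; first by rewrite fib_mcomp_pmor !ffunE /= permKV.
by rewrite lab_mcomp_pmor !ffunE permKV addbb.
Qed.

Lemma inHplus_pmor n (s : {perm 'I_n.+1}) (l : {ffun 'I_n.+1 -> bool}) :
  s ord0 = ord0 -> l ord0 = false -> inHplus (pmor s l).
Proof.
move=> s0 l0; split; last by rewrite /= ffunE s0 inE.
split; first exact: valid_pmor.
exists (pmor (s^-1)%g [ffun k => l (s k)]).
by rewrite valid_pmor mcomp_pmorV mcomp_pmorVl.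
Qed.

Lemma inHplusP n (h : mor n n) : inHplus h ->
  exists2 s : {perm 'I_n.+1}, h = pmor s (lab h) & s ord0 = ord0 /\ lab h ord0 = false.
Proof.
case=> [[vh [h' [_ [hh' _]]]] [h00 l0]].
have fib_hh' i : flatten [seq actseq (lab h j) (fib h' j) | j <- fib h i] = [:: i].
  by have := congr1 (fun g : mor n n => fib g i) hh'; rewrite /= !ffunE.
have ne i : 0 < size (fib h i) by have := fib_hh' i; case: (fib h i).
have /forallP one : [forall i, size (fib h i) == 1].
  by have := fibcat_leqif ne; rewrite (perm_size vh) size_enum_ord => /leqif_refl.
have [t fibt] : exists t, forall i, fib h i = [:: t i].
  by exists (fun i => head ord0 (fib h i)) => i; have := one i; case: (fib h i) => [|x []].
have fib'h i : actseq (lab h (t i)) (fib h' (t i)) = [:: i].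
  by rewrite -(fib_hh' i) fibt /= cats0.
have tinj : injective t by move=> i j eqt; have := fib'h i; rewrite eqt fib'h => -[].
exists (perm tinj); last by move: h00; rewrite fibt inE permE => /eqP.
by apply: mor_ext => [i|k] //=; rewrite ffunE permE fibt.
Qed.

Definition rshape n m (a : mor n m) (c : bool) :=
  [/\ const_lab a c, cyclic n c (word a) & 0 \in fibn a 0].

Definition nonempty_fibres n m (a : mor n m) := forall k, k <= m -> 0 < size (fibn a k).

Lemma fibn0 n m (a : mor n m) : fibn a 0 = map val (fib a ord0).
Proof. exact: fibn_ord a ord0. Qed.

Lemma factor_rhomor n m (a : mor n m) : rshape a true ->
  exists2 a' : mor n m, a = mcomp (rhomor m) a' & rshape a' false.
Proof.
case=> laba cyca a00; pose G j := rev (fibn a (if j == 0 then 0 else m.+1 - j)).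
have Gn j : all (leq^~ n) (G j) by rewrite all_rev fibn_ub.
have Ea : a = mcomp (rhomor m) (mkmor n m G false).
  apply: (factor_presented (presented_rhomor m) (fun j _ => Gn j)) => [//|k km].
  rewrite /rfib /G; case: (k =P 0) => [->|/eqP k0] /=; first by rewrite revK cats0.
  by rewrite ifF ?subKn ?revK ?cats0 //; lia.
exists (mkmor n m G false) => //; split=> [x||].
- by rewrite ffunE.
- have [k wa] := word_rhomor (mkmor n m G false); rewrite -Ea in wa.
  have -> : word (mkmor n m G false) = rotr k (rev (word a)) by rewrite wa revK rotK.
  exact/cyclic_rotr/(cyclic_rev cyca).
- by rewrite fibn_mkmor // /G mem_rev.
Qed.

Lemma factor_smor n m (a : mor n m.+1) k : rshape a false -> 0 < k <= m.+1 ->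
  fibn a k = [::] -> exists2 a' : mor n m, a = mcomp (smor m k.-1) a' & rshape a' false.
Proof.
case=> laba cyca a00 /andP[k0 km] ak; pose G j := fibn a (if j < k then j else j.+1).
have km' : k.-1 <= m by lia.
have Ea : a = mcomp (smor m k.-1) (mkmor n m G false).
  apply: (factor_presented (presented_smor km') (fun j _ => fibn_ub a _)) => [//|j jm].
  rewrite /sfib /G; case: ifP => [jk|kj]; first by rewrite /= cats0 ifT //; lia.
  case: (j =P k.-1.+1) => [jk|/eqP kj'] /=; first by rewrite -ak; congr fibn; lia.
  by rewrite cats0 ifF; [congr fibn|]; lia.
exists (mkmor n m G false) => //; split=> [x||].
- by rewrite ffunE.
- by rewrite -(word_smor _ km') -Ea.
- by rewrite fibn_mkmor ?fibn_ub // /G k0.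
Qed.

Lemma factor_dmor n m (a : mor n m) k P Q :
  rshape a false -> nonempty_fibres a -> k <= m -> fibn a k = P ++ Q ->
  0 < size P -> 0 < size Q -> (k = 0 -> 0 \in P) ->
  exists2 a' : mor n m.+1, a = mcomp (dmor m k) a' & rshape a' false /\ nonempty_fibres a'.
Proof.
move=> [laba cyca a00] nea km ak P0 Q0 P00.
pose G j := if j < k then fibn a j else if j == k then P else if j == k.+1 then Q
            else fibn a j.-1.
have [nP nQ] : all (leq^~ n) P /\ all (leq^~ n) Q by apply/andP; rewrite -all_cat -ak fibn_ub.
have Gn j : all (leq^~ n) (G j) by rewrite /G; do !case: ifP => _ //; exact: fibn_ub.
have Ea : a = mcomp (dmor m k) (mkmor n m.+1 G false).
  apply: (factor_presented (presented_dmor (leqW km)) (fun j _ => Gn j)) => [//|j jm].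
  rewrite /dfib km /G; case: ifP => [jk|kj] /=; first by rewrite jk cats0.
  case: (j =P k) => [->|/eqP jk] /=.
    by rewrite ltnn eqxx ltnNge leqnSn (gtn_eqF (ltnSn k)) eqxx cats0.
  by rewrite cats0 ifF ?ifF ?ifF //; apply/negbTE/negP; lia.
exists (mkmor n m.+1 G false) => //; split; first split=> [x||].
- by rewrite ffunE.
- by rewrite -(word_dmor _ km) -Ea.
- rewrite fibn_mkmor // /G; case: ifP => // /negbT; rewrite -eqn0Ngt => /eqP k0.
  by rewrite k0 eqxx; apply: P00.
- move=> j jm; rewrite fibn_mkmor // /G.
  case: ifP => [jk|_]; first by apply: nea; lia.
  case: ifP => // _; case: ifP => // _; apply: nea; lia.
Qed.

Lemma factor_dmor_last n m (a : mor n m) P :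
  rshape a false -> nonempty_fibres a -> fibn a 0 = P ++ [:: 0] -> 0 < size P ->
  exists2 a' : mor n m.+1, a = mcomp (dmor m m.+1) a' & rshape a' false /\ nonempty_fibres a'.
Proof.
move=> [laba cyca a00] nea a0 P0.
pose G j := if j == 0 then [:: 0] else if j == m.+1 then P else fibn a j.
have [nP _] : all (leq^~ n) P /\ all (leq^~ n) [:: 0] by apply/andP; rewrite -all_cat -a0 fibn_ub.
have Gn j : all (leq^~ n) (G j) by rewrite /G; do !case: ifP => _ //; exact: fibn_ub.
have Ea : a = mcomp (dmor m m.+1) (mkmor n m.+1 G false).
  apply: (factor_presented (presented_dmor (leqnn _)) (fun j _ => Gn j)) => [//|j jm].
  rewrite /dfib ltnn /G; case: (j =P 0) => [->|/eqP j0] /=; first by rewrite eqxx a0.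
  by rewrite (negbTE j0) cats0 ifF //; lia.
exists (mkmor n m.+1 G false) => //; split; first split=> [x||].
- by rewrite ffunE.
- have [k wa] := word_dmor_last (mkmor n m.+1 G false); rewrite -Ea in wa.
  by rewrite -(rotK k (word _)) -wa; apply: cyclic_rotr.
- by rewrite fibn_mkmor // /G inE.
- move=> j jm; rewrite fibn_mkmor // /G.
  by case: ifP => // _; case: ifP => // jm1; apply: nea; lia.
Qed.

Lemma split_fibre n m (a : mor n m) k :
  rshape a false -> nonempty_fibres a -> k <= m -> 1 < size (fibn a k) ->
  exists i (a' : mor n m.+1),
    [/\ i <= m.+1, a = mcomp (dmor m i) a', rshape a' false & nonempty_fibres a'].
Proof.
move=> sha nea km big; have [_ _ a00] := sha.
have [k0|kp] := posnP k; last first.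
  have [|||a' Ea [sha' nea']] := factor_dmor sha nea km (esym (cat_take_drop 1 _)).
  - by rewrite size_take big.
  - by rewrite size_drop subn_gt0.
  - by move=> k0; rewrite k0 in kp.
  by exists k, a'; split=> //; apply: leqW.
(* 0 must stay over 0: when it ends its fibre, the special face d_(m+1) splits off the rest. *)
subst k; set l := fibn a 0 in a00 big; have il : index 0 l < size l by rewrite index_mem.
case: (ltnP (index 0 l).+1 (size l)) => [ilt|ige].
  have [|||a' Ea [sha' nea']] := factor_dmor sha nea km (esym (cat_take_drop (index 0 l).+1 l)).
  - by rewrite size_take ilt.
  - by rewrite size_drop subn_gt0.
  - by move=> _; rewrite (take_nth 0) ?mem_rcons ?mem_head // nth_index.
  by exists 0, a'.
have [||a' Ea [sha' nea']] := @factor_dmor_last _ _ a (take (index 0 l) l) sha nea.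
  - rewrite -[fibn a 0](cat_take_drop (index 0 l)); congr (_ ++ _).
    by rewrite (drop_nth 0) // nth_index // drop_oversize.
  - by rewrite size_take il; lia.
by exists m.+1, a'.
Qed.

Lemma singleton_fibres_idm n (a : mor n n) :
  rshape a false -> (forall i, size (fib a i) == 1) -> a = idm n.
Proof.
case=> laba cyca a00 one.
have [t fibt] : exists t, forall i, fib a i = [:: t i].
  by exists (fun i => head ord0 (fib a i)) => i; have := one i; case: (fib a i) => [|x []].
have fibcat_t : fibcat a = map t (enum 'I_n.+1).
  by rewrite /fibcat (eq_map fibt) flatten_map1.
have t0 : val (t ord0) = 0 by move: a00; rewrite fibn0 fibt inE => /eqP.
have wa : word a = iota 0 n.+1.
  rewrite -(cyclic_index0 cyca) (_ : index 0 _ = 0) ?rot0 //.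
  by rewrite word_fibcat fibcat_t enum_ordSl /= t0.
have tid : map t (enum 'I_n.+1) = map id (enum 'I_n.+1).
  by apply: (inj_map val_inj); rewrite map_id -fibcat_t -word_fibcat wa val_enum_ord.
apply: mor_ext => i; rewrite /= !ffunE ?laba // fibt.
by move/eq_in_map: tid => /(_ i); rewrite mem_enum => ->.
Qed.

Lemma nonempty_rshape_inR n m (a : mor n m) :
  rshape a false -> nonempty_fibres a -> inR a.
Proof.
have [d] := ubnP (n - m); elim: d m a => // d IH m a ltd sha nea.
have nea' i : 0 < size (fib a i) by have := nea i (leq_ord i); rewrite fibn_ord size_map.
have := fibcat_leqif nea'; have [_ cyca _] := sha.
rewrite -(size_map val) -word_fibcat (perm_size (cyclic_perm cyca)) size_iota => -[le_mn eq_mn].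
case: (pickP (fun i => size (fib a i) != 1)) => [i /= ne1 | one].
  have lt_mn : m < n.
    rewrite -ltnS ltn_neqAle le_mn eq_mn andbT; apply/forallP => /(_ i); exact/negP.
  have big : 1 < size (fibn a i) by rewrite fibn_ord size_map ltn_neqAle eq_sym ne1 nea'.
  have [j [a' [jm -> sha' nea'']]] := split_fibre sha nea (leq_ord i) big.
  by apply: inR_d (IH _ _ _ sha' nea''); lia.
have/eqP[mn] : m.+1 == n.+1 by rewrite eq_mn; apply/forallP => i; move/negbFE: (one i).
subst m; rewrite (singleton_fibres_idm sha) => [|i]; first exact: inR_id.
by move/negbFE: (one i).
Qed.

Lemma rshape_false_inR n m (a : mor n m) : rshape a false -> inR a.
Proof.
elim: m a => [|m IH] a sha; have [_ _ a00] := sha.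
  by apply: nonempty_rshape_inR => // k; rewrite leqn0 => /eqP->; case: (fibn a 0) a00.
case: (pickP (fun k : 'I_m.+2 => (0 < k) && (size (fibn a k) == 0))) => [k /andP[k0 ak] | nea].
  have kb : 0 < k <= m.+1 by rewrite k0 -ltnS ltn_ord.
  have [a' -> sha'] := factor_smor sha kb (size0nil (eqP ak)).
  by apply: inR_s (IH _ sha'); lia.
apply: nonempty_rshape_inR => // k km; case: (posnP k) => [->|k0].
  by case: (fibn a 0) a00.
by have := nea (Ordinal (km : k < m.+2)); rewrite /= k0 lt0n => /negbT.
Qed.

Lemma rshape_inR n m (a : mor n m) c : rshape a c -> inR a.
Proof.
case: c => sha; last exact: rshape_false_inR.
by have [a' -> /rshape_false_inR] := factor_rhomor sha; apply: inR_rho.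
Qed.

Lemma transport_perm (T : finType) (s t : seq T) :
  perm_eq s (enum T) -> perm_eq t (enum T) -> exists p : {perm T}, map p s = t.
Proof.
move=> ps pt; have sz : size t = size s by rewrite (perm_size ps) (perm_size pt).
case: s ps sz => [|x0 s0] ps sz; first by exists 1%g; rewrite (size0nil sz).
set s := x0 :: s0 in ps sz *.
have [us ut] : uniq s /\ uniq t by rewrite (perm_uniq ps) (perm_uniq pt) enum_uniq.
have ins x : x \in s by rewrite (perm_mem ps) mem_enum.
pose tau x := nth x0 t (index x s).
have tauK : cancel tau (fun y => nth x0 s (index y t)).
  by move=> x; rewrite /tau index_uniq ?nth_index // sz index_mem.
exists (perm (can_inj tauK)); apply: (@eq_from_nth _ x0); rewrite size_map // => i lti.
by rewrite (nth_map x0) // permE /tau index_uniq.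
Qed.

Lemma decomposition_exists n m (f : mor n m) : inIGamma f ->
  exists a h, [/\ inR a, inHplus h & f = mcomp a h].
Proof.
case=> vf f00; set c := lab f ord0.
have L0 : ord0 \in fibcat f by rewrite (perm_mem vf) mem_enum.
have pL : index ord0 (fibcat f) <= n.
  by rewrite -ltnS -[X in _ < X](size_enum_ord n.+1) -(perm_size vf) index_mem.
have [w cycw w0] := cyclic_index0_exists c pL; have pw := cyclic_perm cycw.
pose Y := map (@inord n) w.
have wY : map val Y = w.
  by rewrite -map_comp map_id_in // => x; rewrite (perm_mem pw) mem_iota /= => /inordK.
have pY : perm_eq Y (enum 'I_n.+1).
  by apply: (perm_map_inj val_inj); rewrite wY val_enum_ord.
have [p pYL] : exists p : {perm 'I_n.+1}, map p Y = fibcat f := transport_perm pY vf.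
have iY : index ord0 Y = index ord0 (fibcat f) by rewrite -(index_map val_inj) wY w0.
have p0 : p ord0 = ord0.
  have Y0 : ord0 \in Y by rewrite (perm_mem pY) mem_enum.
  by rewrite -{1}(nth_index ord0 Y0) -(nth_map ord0 ord0) ?index_mem // pYL iY nth_index.
pose a := mcomp f (pmor (p^-1)%g [ffun k => lab f (p k) (+) c]).
have laba : const_lab a c.
  by move=> k; rewrite lab_mcomp_pmor invgK ffunE addbAC addbb.
exists a, (pmor p [ffun k => lab f k (+) c]); split.
- apply: (@rshape_inR _ _ _ c); split=> //.
    by rewrite word_fibcat fibcat_mcomp_pmor -pYL mapK ?wY //; exact: permK.
  rewrite fibn0 fib_mcomp_pmor -map_comp; apply/mapP; exists ord0 => //=.
  by rewrite -p0 permK.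
- by apply: inHplus_pmor; rewrite ?ffunE ?addbb.
- apply: mor_ext => [i|k]; first by rewrite fib_mcomp_pmor fib_mcomp_pmor mapK //; exact: permKV.
  by rewrite lab_mcomp_pmor laba ffunE addbK.
Qed.

Lemma decomposition_unique n m (a1 a2 : mor n m) (h1 h2 : mor n n) :
  inR a1 -> inR a2 -> inHplus h1 -> inHplus h2 -> mcomp a1 h1 = mcomp a2 h2 ->
  a1 = a2 /\ h1 = h2.
Proof.
move=> /inR_cyclic[c1 [lab1 cyc1]] /inR_cyclic[c2 [lab2 cyc2]].
move=> /inHplusP[s1 eh1 [s10 l10]] /inHplusP[s2 eh2 [s20 l20]].
rewrite eh1 eh2 => eq12.
have labE k : lab h1 k (+) c1 = lab h2 k (+) c2.
  rewrite -(lab1 ((s1^-1)%g k)) -(lab2 ((s2^-1)%g k)).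
  by rewrite -(lab_mcomp_pmor a1 s1) -(lab_mcomp_pmor a2 s2) eq12.
have c12 : c1 = c2 by have := labE ord0; rewrite l10 l20.
subst c2; have lab12 k : lab h1 k = lab h2 k by apply: (can_inj (addbK c1)); exact: labE.
have fib12 : map s1 (fibcat a1) = map s2 (fibcat a2).
  by rewrite -(fibcat_mcomp_pmor a1 s1 (lab h1)) -(fibcat_mcomp_pmor a2 s2 (lab h2)) eq12.
have word12 : word a1 = word a2.
  apply: (cyclic_index0_inj cyc1 cyc2); rewrite !word_fibcat.
  rewrite -[0]/(val (@ord0 n)) !(index_map val_inj) -(index_map (@perm_inj _ s1)).
  by rewrite s10 fib12 -{1}s20 (index_map (@perm_inj _ s2)).
have fibcat12 : fibcat a1 = fibcat a2 by apply: (inj_map val_inj); rewrite -!word_fibcat.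
have s12 : s1 = s2.
  apply/permP => x; move: fib12; rewrite fibcat12 => /eq_in_map; apply.
  by rewrite -(mem_map val_inj) -word_fibcat (perm_mem (cyclic_perm cyc2)) mem_iota /=.
subst s2; split; last by rewrite eh1 eh2; congr pmor; apply/ffunP.
apply: mor_ext => [i|k]; last by rewrite lab1 lab2.
apply: (inj_map (@perm_inj _ s1)).
by rewrite -(fib_mcomp_pmor a1 s1 (lab h1)) -(fib_mcomp_pmor a2 s1 (lab h2)) eq12.
Qed.

Theorem mainTheorem5 (n m : nat) (f : mor n m) :
  inIGamma f ->
  exists! ah : mor n m * mor n n,
    inR ah.1 /\ inHplus ah.2 /\ f = mcomp ah.1 ah.2.
Proof.
move=> /decomposition_exists[a [h [Ra Hh Ef]]].
exists (a, h); split=> // -[a' h'] /= [Ra' [Hh' Ef']].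
by have [-> ->] := decomposition_unique Ra Ra' Hh Hh' (etrans (esym Ef) Ef').
Qed.
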